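(* (1) All inert tori in $G$ are conjugate in $G$. (2) If $T$ is an inert torus, there exists $g\in G$ such that $gTg^{-1}$ is an inert torus in canonical form. (3) If $T_1,T_2$ are inert tori in canonical form, there exists $y\in\mathfrak o^\times$ such that $T_1=a(y)T_2a(y)^{-1}$. (4) If $T$ is an inert torus in canonical form, then $G=B_1T=TB_1$ and $K=B_1(\mathfrak o)T(\mathfrak o)=T(\mathfrak o)B_1(\mathfrak o)$.
   Context: $F$ is a non-archimedean local field of characteristic zero with ring of integers $\mathfrak o$ and odd residue field cardinality; $E$ is its unramified quadratic extension. $G=\mathrm{GL}_2(F)$, $K=\mathrm{GL}_2(\mathfrak o)$, $a(y)=\begin{pmatrix}y&0\\0&1\end{pmatrix}$, $B_1=\{\begin{pmatrix}y&x\\0&1\end{pmatrix}:y\in F^\times,x\in F\}$, $B_1(\mathfrak o)=B_1\cap K$. For $\alpha,\beta,\gamma\in F$ let $S=\begin{pmatrix}\alpha&\beta/2\\\beta/2&\gamma\end{pmatrix}$ and $T_{\alpha,\beta,\gamma}=\{g\in G:{}^tgSg=\det(g)S\}$. A subgroup $T$ is an inert torus if $T=T_{\alpha,\beta,\gamma}$ with $\delta=\beta^2-4\alpha\gamma$ satisfying $F(\sqrt\delta)=E$ (equivalently $\delta$ is a non-square with $v(\delta)$ even). It is in canonical form if $T=T_{\alpha,0,1}$ with $\alpha\in\mathfrak o^\times$ and $-\alpha$ not a square in $\mathfrak o^\times$. $T(\mathfrak o)=T\cap K$. *)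

From HB Require Import structures.
From mathcomp Require Import all_boot all_order all_algebra.
Set Implicit Arguments. Unset Strict Implicit. Unset Printing Implicit Defensive.
Import Order.TTheory GRing.Theory Num.Theory.
Local Open Scope ring_scope.

Section LocalField.
Variables (F : fieldType) (v : F -> int).

(* ring of integers o, its maximal ideal m, and units o^x, via the valuation v
   (v 0 is irrelevant: 0 is treated as having valuation +oo) *)
Definition in_o (x : F) : Prop := x = 0 \/ 0 <= v x.
Definition in_m (x : F) : Prop := x = 0 \/ 0 < v x.
Definition is_ounit (x : F) : Prop := x <> 0 /\ v x = 0.

Record nonarch_local_field : Prop := {
  nalf_char0 : forall n : nat, (n.+1)%:R != 0 :> F;
  nalf_mul : forall x y, x <> 0 -> y <> 0 -> v (x * y) = v x + v y;
  nalf_ultra : forall x y, x <> 0 -> y <> 0 -> x + y <> 0 ->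
      Num.min (v x) (v y) <= v (x + y);
  nalf_normalized : exists pi : F, pi <> 0 /\ v pi = 1;
  nalf_complete : forall u : nat -> F,
      (forall k : int, exists N, forall m n, (N <= m)%N -> (N <= n)%N ->
          u m - u n = 0 \/ k <= v (u m - u n)) ->
      exists l : F, forall k : int, exists N, forall n, (N <= n)%N ->
          u n - l = 0 \/ k <= v (u n - l);
  nalf_residue : exists s : seq F,
      [/\ forall r, r \in s -> in_o r,
          uniq s,
          forall r1 r2, r1 \in s -> r2 \in s -> r1 != r2 -> ~ in_m (r1 - r2),
          forall x, in_o x -> exists2 r, r \in s & in_m (x - r)
        & odd (size s)]
}.

Definition mx2 (a b c d : F) : 'M[F]_2 :=
  \matrix_(i < 2, j < 2)
    if (i == 0 :> nat) then (if (j == 0 :> nat) then a else b)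
    else (if (j == 0 :> nat) then c else d).

Definition inG (g : 'M[F]_2) : Prop := g \in unitmx.
Definition inK (g : 'M[F]_2) : Prop :=
  (forall i j, in_o (g i j)) /\ is_ounit (\det g).
Definition amx (y : F) : 'M[F]_2 := mx2 y 0 0 1.
Definition inB1 (g : 'M[F]_2) : Prop :=
  exists y x, y <> 0 /\ g = mx2 y x 0 1.
Definition inB1o (g : 'M[F]_2) : Prop := inB1 g /\ inK g.

Definition Smx (a b c : F) : 'M[F]_2 := mx2 a (b / 2%:R) (b / 2%:R) c.
Definition torus (a b c : F) (g : 'M[F]_2) : Prop :=
  inG g /\ g^T *m Smx a b c *m g = \det g *: Smx a b c.

Definition is_square (x : F) : Prop := exists y, y * y = x.

(* delta = b^2 - 4ac generates the unramified quadratic extension: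
   non-square with even valuation *)
Definition inert_params (a b c : F) : Prop :=
  let d := b ^+ 2 - 4%:R * a * c in
  d <> 0 /\ ~ is_square d /\ ~~ odd `|v d|%N.

Definition same_set (A B : 'M[F]_2 -> Prop) : Prop := forall g, A g <-> B g.

Definition inert_torus (T : 'M[F]_2 -> Prop) : Prop :=
  exists a b c, inert_params a b c /\ same_set T (torus a b c).

Definition canonical_param (a : F) : Prop :=
  is_ounit a /\ ~ (exists u, is_ounit u /\ u * u = - a).

Definition canonical_torus (T : 'M[F]_2 -> Prop) : Prop :=
  exists a, canonical_param a /\ same_set T (torus a 0 1).

Definition conj_set (g : 'M[F]_2) (T : 'M[F]_2 -> Prop) : 'M[F]_2 -> Prop :=
  fun x => exists2 t, T t & x = g *m t *m invmx g.

Definition prod_set (A B : 'M[F]_2 -> Prop) : 'M[F]_2 -> Prop :=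
  fun x => exists a b, [/\ A a, B b & x = a *m b].

Definition inTo (T : 'M[F]_2 -> Prop) (g : 'M[F]_2) : Prop := T g /\ inK g.

End LocalField.

From HB Require Import structures.
From mathcomp Require Import all_boot all_order all_algebra.
From mathcomp Require Import ring zify.
Import Order.TTheory GRing.Theory Num.Theory.
Local Open Scope ring_scope.
Set Implicit Arguments. Unset Strict Implicit.

(* An inert torus [T_{a,b,c}] is the similitude group of the binary form [S];
   completing the square and rescaling by [a(w)], with [2 v(w)] absorbing the
   even valuation of the discriminant, turns [S] into [diag(a, 1)] with [a] a
   unit and [-a] a nonsquare.  Two such [a] differ by a unit square: [2] is a
   unit since the residue field has odd order, so Hensel's lemma reduces
   squares to residue squares, and the unit residue nonsquares form a single
   coset of the squares because squaring is at most two-to-one.  Finally, since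
   [diag(a, 1)] is anisotropic, [T_{a,0,1}] contains an element [t] with any
   given nonzero bottom row, hence [g t^-1] lies in [B_1] for the [t] sharing
   the bottom row of [g]; when [g] lies in [K], that row is primitive and
   [a p^2 + c^2] is a unit on it, so [t] lies in [K] as well. *)

Section Matrix2.
Variable F : fieldType.
Implicit Types (a b c d p q y : F) (g h t : 'M[F]_2) (A B X : 'M[F]_2 -> Prop).

Lemma ord2P (i : 'I_2) : i = 0 \/ i = 1.
Proof. by case: i => [[|[|k]] hk]; [left|right|] => //; apply/eqP. Qed.

Lemma mx2E a b c d :
  (mx2 a b c d 0 0 = a) * (mx2 a b c d 0 1 = b) * (mx2 a b c d 1 0 = c) * (mx2 a b c d 1 1 = d).
Proof. by rewrite /mx2 !mxE. Qed.

Lemma mx2_eta g : g = mx2 (g 0 0) (g 0 1) (g 1 0) (g 1 1).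
Proof.
apply/matrixP => i j; rewrite /mx2 mxE.
by case: (ord2P i) => ->; case: (ord2P j) => ->.
Qed.

Lemma mx2_inj a b c d a' b' c' d' :
  mx2 a b c d = mx2 a' b' c' d' <-> [/\ a = a', b = b', c = c' & d = d'].
Proof.
split=> [h|[-> -> -> ->] //].
have := congr1 (fun g : 'M[F]_2 => (g 0 0, g 0 1, g 1 0, g 1 1)) h.
by rewrite /mx2 !mxE => -[].
Qed.

Lemma mulmx2 a b c d a' b' c' d' :
  mx2 a b c d *m mx2 a' b' c' d' =
  mx2 (a * a' + b * c') (a * b' + b * d') (c * a' + d * c') (c * b' + d * d').
Proof.
apply/matrixP => i j; rewrite !mxE !big_ord_recr big_ord0 /= add0r !mxE /=.
by case: (ord2P i) => ->; case: (ord2P j) => ->.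
Qed.

Lemma trmx2 a b c d : (mx2 a b c d)^T = mx2 a c b d.
Proof.
apply/matrixP => i j; rewrite !mxE.
by case: (ord2P i) => ->; case: (ord2P j) => ->.
Qed.

Lemma scalemx2 a b c d y : y *: mx2 a b c d = mx2 (y * a) (y * b) (y * c) (y * d).
Proof.
apply/matrixP => i j; rewrite !mxE.
by case: (ord2P i) => ->; case: (ord2P j) => ->.
Qed.

Lemma det_mx2 a b c d : \det (mx2 a b c d) = a * d - b * c.
Proof.
rewrite (expand_det_row _ 0) !big_ord_recr big_ord0 /= add0r.
by rewrite /cofactor !det_mx11 /row' /col' !mxE /= !expr0 !expr1; ring.
Qed.

Lemma unitmx2 a b c d : (mx2 a b c d \in unitmx) = (a * d - b * c != 0).
Proof. by rewrite unitmxE det_mx2 unitfE. Qed.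

Lemma mx2_1 : 1%:M = mx2 1 0 0 1 :> 'M[F]_2.
Proof.
apply/matrixP => i j; rewrite !mxE.
by case: (ord2P i) => ->; case: (ord2P j) => ->.
Qed.

Lemma invmx_uniq g h : g *m h = 1%:M -> invmx g = h.
Proof.
move=> gh; have [ug _] := mulmx1_unit gh.
by rewrite -[LHS]mulmx1 -gh mulmxA mulVmx // mul1mx.
Qed.

Lemma invmx2 a b c d : a * d - b * c != 0 ->
  invmx (mx2 a b c d) = (a * d - b * c)^-1 *: mx2 d (- b) (- c) a.
Proof.
by move=> hD; apply: invmx_uniq; rewrite scalemx2 mulmx2 mx2_1; apply/mx2_inj; split; field.
Qed.

Lemma invmxM g h : g \in unitmx -> h \in unitmx -> invmx (g *m h) = invmx h *m invmx g.
Proof. by move=> ug uh; apply: invmx_uniq; rewrite !mulmxA mulmxK // mulmxV. Qed.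

Lemma same_set_sym A B : same_set A B -> same_set B A.
Proof. by move=> h x; split=> /h. Qed.

Lemma same_set_trans A B X : same_set A B -> same_set B X -> same_set A X.
Proof. by move=> h1 h2 x; split=> [/h1/h2|/h2/h1]. Qed.

Lemma conj_set_same g A B : same_set A B -> same_set (conj_set g A) (conj_set g B).
Proof. by move=> h x; split=> -[t /h ht ->]; exists t. Qed.

Lemma conj_setM g h A : g \in unitmx -> h \in unitmx ->
  same_set (conj_set g (conj_set h A)) (conj_set (g *m h) A).
Proof.
move=> ug uh x; rewrite /conj_set invmxM //; split.
  by case=> _ [t ht ->] ->; exists t => //; rewrite !mulmxA.
by case=> t ht ->; exists (h *m t *m invmx h); [exists t | rewrite !mulmxA].
Qed.

Lemma conj_setV g A : g \in unitmx -> same_set (conj_set (invmx g) (conj_set g A)) A.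
Proof.
move=> ug x; have gxg t : invmx g *m (g *m t *m invmx g) *m invmx (invmx g) = t.
  by rewrite invmxK !mulmxA mulVmx // mul1mx mulmxKV.
split; first by case=> _ [t ht ->] ->; rewrite gxg.
by move=> hx; exists (g *m x *m invmx g); [exists x | rewrite gxg].
Qed.

Definition conjugate A B := exists2 g, inG g & same_set (conj_set g A) B.

Lemma conjugate_sym A B : conjugate A B -> conjugate B A.
Proof.
case=> g ug hAB; exists (invmx g); first by rewrite /inG unitmx_inv.
exact: same_set_trans (conj_set_same _ (same_set_sym hAB)) (conj_setV _ ug).
Qed.

Lemma conjugate_trans A B X : conjugate A B -> conjugate B X -> conjugate A X.
Proof.
case=> g ug hAB [h uh hBX]; exists (h *m g); first by rewrite /inG unitmx_mul uh ug.
apply: same_set_trans (same_set_sym (conj_setM _ uh ug)) _.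
exact: same_set_trans (conj_set_same _ hAB) hBX.
Qed.

Lemma same_set_conjugate A B : same_set A B -> conjugate A B.
Proof.
move=> hAB; exists 1%:M; first exact: unitmx1.
apply: same_set_trans hAB => x; rewrite /conj_set invmx1.
by split=> [[t ht ->]|hx]; [rewrite mulmx1 mul1mx | exists x; rewrite ?mulmx1 ?mul1mx].
Qed.

Definition form_torus (S : 'M[F]_2) g := g \in unitmx /\ g^T *m S *m g = \det g *: S.

Lemma torusE a b c : torus a b c = form_torus (Smx a b c).
Proof. by []. Qed.

Lemma Smx_diag a : Smx a 0 1 = mx2 a 0 0 1.
Proof. by rewrite /Smx mul0r. Qed.

Lemma form_torusZ S y : y != 0 -> same_set (form_torus (y *: S)) (form_torus S).
Proof.
move=> y0 g; rewrite /form_torus -scalemxAr -scalemxAl scalerA mulrC -scalerA.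
by split=> -[ug h]; split=> //; [apply: (scalerI y0) | rewrite h].
Qed.

Lemma form_torusV S t : form_torus S t -> form_torus S (invmx t).
Proof.
case=> ut ht; split; first by rewrite unitmx_inv.
have dt : \det t != 0 by rewrite -unitfE -unitmxE.
have h : invmx t^T *m (t^T *m S *m t) *m invmx t = S.
  by rewrite !mulmxA mulVmx ?unitmx_tr // mul1mx mulmxK.
rewrite ht -scalemxAr -scalemxAl in h.
by rewrite det_inv trmx_inv -[in RHS]h scalerA mulVf // scale1r.
Qed.

Lemma conj_form_torus S g : g \in unitmx ->
  same_set (conj_set g (form_torus (g^T *m S *m g))) (form_torus S).
Proof.
move=> ug; have dg : \det g != 0 by rewrite -unitfE -unitmxE.
have gTu : g^T \in unitmx by rewrite unitmx_tr.
have det_conj t : \det (g *m t *m invmx g) = \det t.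
  by rewrite !det_mulmx det_inv mulrC mulrA mulVf // mul1r.
move=> x; split.
  case=> t [ut ht] ->; split; first by rewrite !unitmx_mul ug ut unitmx_inv.
  have -> : (g *m t *m invmx g)^T *m S *m (g *m t *m invmx g) =
      invmx g^T *m (t^T *m (g^T *m S *m g) *m t) *m invmx g.
    by rewrite !trmx_mul trmx_inv !mulmxA.
  by rewrite ht det_conj -scalemxAr -scalemxAl !mulmxA mulVmx // mul1mx mulmxK.
case=> ux hx; exists (invmx g *m x *m g); last by rewrite !mulmxA mulmxV // mul1mx mulmxK.
split; first by rewrite !unitmx_mul unitmx_inv ux ug.
have -> : \det (invmx g *m x *m g) = \det x.
  by rewrite !det_mulmx det_inv mulrAC mulVf // mul1r.
rewrite !trmx_mul trmx_inv !mulmxA mulmxKV // mulmxK //.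
by rewrite -!mulmxA (mulmxA x^T) (mulmxA (x^T *m S)) hx -scalemxAl -scalemxAr !mulmxA.
Qed.

Lemma amx_unit y : y != 0 -> amx y \in unitmx.
Proof. by move=> y0; rewrite unitmx2 mulr1 mulr0 subr0. Qed.

Lemma conj_amx_torus a y : y != 0 ->
  same_set (conj_set (amx y) (torus a 0 1)) (torus (a / y ^+ 2) 0 1).
Proof.
move=> y0; rewrite !torusE !Smx_diag.
have -> : mx2 a 0 0 1 = (amx y)^T *m mx2 (a / y ^+ 2) 0 0 1 *m amx y.
  by rewrite trmx2 !mulmx2; apply/mx2_inj; split; field.
exact: conj_form_torus (amx_unit y0).
Qed.

Lemma conj_torus_diag a b c : c != 0 -> 2%:R != 0 :> F ->
  conjugate (torus a b c) (torus (- (b ^+ 2 - 4%:R * a * c) / (2%:R * c) ^+ 2) 0 1).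
Proof.
move=> c0 two0; pose L := mx2 1 0 (b / (2%:R * c)) 1.
pose a' := - (b ^+ 2 - 4%:R * a * c) / (2%:R * c) ^+ 2.
have uL : L \in unitmx by rewrite unitmx2 mulr1 mul0r subr0 oner_neq0.
have -> : torus a b c = form_torus (c *: (L^T *m Smx a' 0 1 *m L)).
  rewrite torusE /L /a' Smx_diag trmx2 !mulmx2 scalemx2.
  by congr form_torus; apply/mx2_inj; split; field; rewrite c0 two0.
exists L => //.
exact: same_set_trans (conj_set_same _ (form_torusZ _ c0)) (conj_form_torus _ uL).
Qed.

Lemma diag_form_anisotropic a p q : (forall u, u * u != - a) ->
  p * p + a * q * q = 0 -> p = 0 /\ q = 0.
Proof.
move=> na hpq; have [q0|q0] := eqVneq q 0.
  by move: hpq; rewrite q0 !mulr0 addr0 => /eqP; rewrite mulf_eq0 orbb => /eqP.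
have /eqP[] := na (p / q); rewrite -[LHS]subr0 -(mul0r (q * q)^-1) -hpq.
by field.
Qed.

Lemma torus_diag_elt a p q : p * p + a * q * q != 0 ->
  torus a 0 1 (mx2 p q (- a * q) p).
Proof.
move=> hpq; rewrite torusE Smx_diag; split.
  by rewrite unitmx2; apply: contra hpq => /eqP h; apply/eqP; rewrite -h; ring.
by rewrite trmx2 !mulmx2 det_mx2 scalemx2; apply/mx2_inj; split; ring.
Qed.

Lemma row1_mulmxV g t : t \in unitmx -> row 1 g = row 1 t -> row 1 (g *m invmx t) = row 1 1%:M.
Proof. by move=> ut hgt; rewrite row_mul hgt -row_mul mulmxV. Qed.

Lemma inB1E g : inB1 g <-> g \in unitmx /\ row 1 g = row 1 1%:M.
Proof.
split=> [[y [x [/eqP y0 ->]]]|[ug /matrixP hg]].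
  rewrite unitmx2 mulr1 mulr0 subr0 y0; split=> //.
  by apply/matrixP => i j; rewrite !mxE; case: (ord2P j) => ->.
have [g10 g11] : g 1 0 = 0 /\ g 1 1 = 1 by have := hg 0 0; have := hg 0 1; rewrite !mxE.
rewrite (mx2_eta g) g10 g11 in ug *; exists (g 0 0), (g 0 1); split=> //.
by apply/eqP; move: ug; rewrite unitmx2 mulr1 mulr0 subr0.
Qed.

Lemma inB1_unit g : inB1 g -> g \in unitmx.
Proof. by case/inB1E. Qed.

Lemma inB1V g : inB1 g -> inB1 (invmx g).
Proof.
case/inB1E=> ug hg; apply/inB1E; rewrite unitmx_inv; split=> //.
by rewrite -[invmx g]mul1mx; apply: row1_mulmxV.
Qed.

(* The element of [T_{a,0,1}] with the bottom row of [g], so that [g t^-1] lies in [B_1]. *)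
Definition torus_factor a g := mx2 (g 1 1) (- g 1 0 / a) (g 1 0) (g 1 1).

Section TorusFactor.
Variable a : F.
Hypotheses (a0 : a != 0) (a_nonsq : forall u, u * u != - a).

Lemma torus_factorP g : g \in unitmx -> torus a 0 1 (torus_factor a g).
Proof.
move=> ug; set p := g 1 1; set q := - g 1 0 / a.
have g10 : g 1 0 = - a * q by rewrite /q; field.
have -> : torus_factor a g = mx2 p q (- a * q) p by rewrite /torus_factor -g10.
apply: torus_diag_elt; apply/eqP => /(diag_form_anisotropic a_nonsq) [p0 q0].
by move: ug; rewrite (mx2_eta g) unitmx2 -/p g10 p0 q0 !mulr0 subr0 eqxx.
Qed.

Lemma B1_torus_factor g : g \in unitmx -> inB1 (g *m invmx (torus_factor a g)).
Proof.
move=> ug; have [ut _] := torus_factorP ug.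
apply/inB1E; rewrite unitmx_mul ug unitmx_inv ut; split=> //.
apply: row1_mulmxV => //; apply/matrixP => i j.
by rewrite !mxE; case: (ord2P j) => -> /=.
Qed.

Lemma torus_factor_decomp g : g \in unitmx ->
  g = (g *m invmx (torus_factor a g)) *m torus_factor a g.
Proof. by move=> ug; have [ut _] := torus_factorP ug; rewrite mulmxKV. Qed.

End TorusFactor.

Lemma prod_set_swap X A B :
  (forall x, X x -> X (invmx x)) ->
  (forall x, A x -> x \in unitmx /\ A (invmx x)) ->
  (forall x, B x -> x \in unitmx /\ B (invmx x)) ->
  same_set X (prod_set A B) -> same_set X (prod_set B A).
Proof.
move=> XV AV BV hX x; split.
  move=> /XV /hX [a [b [ha hb xab]]].
  have [[ua ha'] [ub hb']] := (AV a ha, BV b hb).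
  by exists (invmx b), (invmx a); rewrite -invmxM // -xab invmxK.
case=> b [a [hb ha ->]]; have [[ua ha'] [ub hb']] := (AV a ha, BV b hb).
rewrite -[b](invmxK b) -[a](invmxK a) -invmxM ?unitmx_inv //.
by apply: XV; apply/hX; exists (invmx a), (invmx b).
Qed.

End Matrix2.

Lemma card_fixfree_involution (T : finType) (f : T -> T) :
  involutive f -> (forall x, f x != x) -> ~~ odd #|T|.
Proof.
move=> fK ffix; pose A := [set x | enum_rank x < enum_rank (f x)]%N.
have AC : ~: A = f @: A.
  apply/setP => x; rewrite (can_imset_pre _ fK) !inE fK -leqNgt ltn_neqAle.
  by rewrite (inj_eq val_inj) (inj_eq enum_rank_inj) ffix.
have := cardsC A; rewrite AC card_imset; last exact: can_inj fK.
by move=> <-; rewrite addnn odd_double.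
Qed.

Lemma even_int_half (m : int) : ~~ odd `|m|%N -> exists k : int, m = k + k.
Proof.
move=> hm; have hn : `|m|%N = (`|m|%N./2 + `|m|%N./2)%N.
  by rewrite -{1}(odd_double_half `|m|%N) (negPf hm) add0n -addnn.
by exists (if 0 <= m then (`|m|%N./2)%:Z else - (`|m|%N./2)%:Z); case: ifP; lia.
Qed.

Section LocalField.
Variables (F : fieldType) (v : F -> int).
Hypothesis v_mul : forall x y, x <> 0 -> y <> 0 -> v (x * y) = v x + v y.
Hypothesis v_ultra : forall x y, x <> 0 -> y <> 0 -> x + y <> 0 ->
  Num.min (v x) (v y) <= v (x + y).
Implicit Types (x y z w : F) (k l : int).

(* [vge k x] means [x \in pi^k o]. *)
Definition vge k x := (x == 0) || (k <= v x).
Definition ounit x := (x != 0) && (v x == 0).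
Definition residue_square x := exists2 w, vge 0 w & vge 1 (x - w ^+ 2).

Lemma vgeP k x : reflect (x = 0 \/ k <= v x) (vge k x).
Proof. by apply: (iffP orP) => -[/eqP|]; auto. Qed.

Lemma vge0 k : vge k 0.
Proof. by rewrite /vge eqxx. Qed.

Lemma in_oE x : in_o v x <-> vge 0 x.
Proof. exact: rwP (vgeP 0 x). Qed.

Lemma in_mE x : in_m v x <-> vge 1 x.
Proof.
rewrite /in_m; split=> [[->|h]|/vgeP[->|h]]; first exact: vge0.
- by apply/vgeP; right; lia.
- by left.
- by right; lia.
Qed.

Lemma is_ounitE x : is_ounit v x <-> ounit x.
Proof. by rewrite /ounit; split=> [[/eqP -> /eqP ->]|/andP[/eqP h /eqP h']]. Qed.

Lemma vM x y : x != 0 -> y != 0 -> v (x * y) = v x + v y.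
Proof. by move=> /eqP x0 /eqP y0; apply: v_mul. Qed.

Lemma v1 : v 1 = 0.
Proof.
have := vM (oner_neq0 F) (oner_neq0 F); rewrite mulr1 => h.
by apply: (addrI (v 1)); rewrite addr0 -h.
Qed.

Lemma vN x : v (- x) = v x.
Proof.
have N1 : (-1 : F) != 0 by rewrite oppr_eq0 oner_neq0.
have vN1 : v (-1) = 0 by have := vM N1 N1; rewrite mulrNN mulr1 v1; lia.
have [->|x0] := eqVneq x 0; first by rewrite oppr0.
by rewrite -mulN1r vM // vN1 add0r.
Qed.

Lemma vV x : x != 0 -> v x^-1 = - v x.
Proof. by move=> x0; have := vM x0 (invr_neq0 x0); rewrite mulfV // v1; lia. Qed.

Lemma vX x n : x != 0 -> v (x ^+ n) = n%:Z * v x.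
Proof.
move=> x0; elim: n => [|n IH]; first by rewrite expr0 v1 mul0r.
by rewrite exprS vM ?expf_neq0 // IH; lia.
Qed.

Lemma vgeN k x : vge k (- x) = vge k x.
Proof. by rewrite /vge oppr_eq0 vN. Qed.

Lemma vgeW k l x : k <= l -> vge l x -> vge k x.
Proof. by move=> kl /vgeP[->|h]; apply/vgeP; [left | right; apply: le_trans h]. Qed.

Lemma vgeD k x y : vge k x -> vge k y -> vge k (x + y).
Proof.
have [->|x0] := eqVneq x 0; first by rewrite add0r.
have [->|y0] := eqVneq y 0; first by rewrite addr0.
have [->|xy0] := eqVneq (x + y) 0; first by rewrite vge0.
rewrite /vge (negPf x0) (negPf y0) (negPf xy0) /= => hx hy.
apply: le_trans (v_ultra (elimN eqP x0) (elimN eqP y0) (elimN eqP xy0)).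
by rewrite le_min hx hy.
Qed.

Lemma vgeB k x y : vge k x -> vge k y -> vge k (x - y).
Proof. by move=> hx hy; rewrite vgeD ?vgeN. Qed.

Lemma vgeM k l x y : vge k x -> vge l y -> vge (k + l) (x * y).
Proof.
have [->|x0] := eqVneq x 0; first by move=> *; rewrite mul0r vge0.
have [->|y0] := eqVneq y 0; first by move=> *; rewrite mulr0 vge0.
rewrite /vge (negPf x0) (negPf y0) mulf_eq0 (negPf x0) (negPf y0) /= vM //.
exact: lerD.
Qed.

Lemma vgeMl k x y : vge 0 x -> vge k y -> vge k (x * y).
Proof. by move=> hx hy; have := vgeM hx hy; rewrite add0r. Qed.

Lemma vgeMr k x y : vge k x -> vge 0 y -> vge k (x * y).
Proof. by move=> hx hy; have := vgeM hx hy; rewrite addr0. Qed.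

Lemma vge_eq0 x : (forall k : nat, vge k%:Z x) -> x = 0.
Proof.
move=> hx; apply/eqP/negPn/negP => x0.
by move: (hx (`|v x|%N.+1)); rewrite /vge (negPf x0) /=; lia.
Qed.

Lemma ounitE x : ounit x = vge 0 x && ~~ vge 1 x.
Proof.
rewrite /ounit /vge; have [//|x0] /= := eqVneq x 0.
by apply/eqP/andP => [->|[h1 h2]] //; lia.
Qed.

Lemma ounit_vge0 x : ounit x -> vge 0 x.
Proof. by rewrite ounitE => /andP[]. Qed.

Lemma ounitN x : ounit (- x) = ounit x.
Proof. by rewrite /ounit oppr_eq0 vN. Qed.

Lemma ounitM x y : ounit x -> ounit y -> ounit (x * y).
Proof.
move=> /andP[x0 /eqP vx] /andP[y0 /eqP vy].
by rewrite /ounit mulf_neq0 //= vM // vx vy.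
Qed.

Lemma ounitV x : ounit x -> ounit x^-1.
Proof. by move=> /andP[x0 /eqP vx]; rewrite /ounit invr_eq0 x0 vV // vx. Qed.

Lemma ounitV_vge0 x : ounit x -> vge 0 x^-1.
Proof. by move/ounitV/ounit_vge0. Qed.

Lemma ounitD x y : ounit x -> vge 1 y -> ounit (x + y).
Proof.
rewrite !ounitE => /andP[x0 x1] y1; rewrite vgeD ?(vgeW _ y1) //=.
by apply: contra x1 => xy1; rewrite -(addrK y x) vgeB.
Qed.

Lemma ounit_sqr x : ounit (x ^+ 2) -> ounit x.
Proof.
rewrite /ounit expf_eq0 /= => /andP[x0 /eqP h]; rewrite x0 /=.
by rewrite vX // in h; apply/eqP; lia.
Qed.

Lemma vge_ounitMl k x y : ounit x -> vge k (x * y) -> vge k y.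
Proof.
move=> ux hxy; rewrite -[y](mulKf (elimTF andP ux).1).
exact: vgeMl (ounitV_vge0 ux) hxy.
Qed.

Lemma vge1M x y : vge 0 x -> vge 0 y -> vge 1 (x * y) -> vge 1 x || vge 1 y.
Proof.
move=> x0 y0 xy1; apply/negPn/negP; rewrite negb_or => /andP[x1 y1].
have ux : ounit x by rewrite ounitE x0.
have uy : ounit y by rewrite ounitE y0.
by move: (ounitM ux uy); rewrite ounitE xy1 andbF.
Qed.

Lemma inKE g : inK v g <->
  [/\ vge 0 (g 0 0), vge 0 (g 0 1), vge 0 (g 1 0), vge 0 (g 1 1) & ounit (\det g)].
Proof.
rewrite /inK is_ounitE; split=> [[h hd]|[h00 h01 h10 h11 hd]]; first by split=> //; apply/in_oE.
by split=> // i j; apply/in_oE; case: (ord2P i) => ->; case: (ord2P j) => ->.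
Qed.

Lemma inK_unit g : inK v g -> g \in unitmx.
Proof. by case/inKE => _ _ _ _ /andP[h _]; rewrite unitmxE unitfE. Qed.

Lemma inK_mul g h : inK v g -> inK v h -> inK v (g *m h).
Proof.
move=> /inKE[g00 g01 g10 g11 gd] /inKE[h00 h01 h10 h11 hd].
apply/inKE; rewrite det_mulmx ounitM // (mx2_eta g) (mx2_eta h) mulmx2.
by rewrite !mx2E; split=> //; apply: vgeD; apply: vgeMl.
Qed.

Lemma inK_inv g : inK v g -> inK v (invmx g).
Proof.
move=> /inKE[g00 g01 g10 g11 gd]; have /andP[dg _] := gd.
apply/inKE; rewrite det_inv ounitV // (mx2_eta g) invmx2 -?det_mx2 -?mx2_eta //.
rewrite scalemx2 !mx2E; have dV := ounitV_vge0 gd.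
by split=> //; apply: vgeMl; rewrite ?vgeN.
Qed.

Section ResidueSystem.
Variables (R : finType) (e : R -> F) (r0 : R).
Hypothesis e_int : forall r, vge 0 (e r).
Hypothesis e_inj : forall r s, vge 1 (e r - e s) -> r = s.
Hypothesis e_cover : forall x, vge 0 x -> exists r, vge 1 (x - e r).

Definition res x := odflt r0 [pick r | vge 1 (x - e r)].

Lemma resP x : vge 0 x -> vge 1 (x - e (res x)).
Proof.
move=> x0; rewrite /res; case: pickP => [r //|none].
by have [r hr] := e_cover x0; move: (none r); rewrite hr.
Qed.

Lemma res_eq x r : vge 0 x -> vge 1 (x - e r) -> res x = r.
Proof.
move=> x0 hr; apply: e_inj; rewrite -[_ - _](subrKA x) addrC -opprB.
by rewrite vgeB ?resP.
Qed.

(* If [2] were in the maximal ideal, translation by [1] would be a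
   fixed-point-free involution of the residue field. *)
Lemma ounit2_of_odd : odd #|R| -> ounit 2%:R.
Proof.
move=> oddR; have one0 : vge 0 (1 : F) by rewrite /vge v1 lexx orbT.
rewrite ounitE mulr2n vgeD //=; apply/negP => two1.
pose f r := res (e r + 1).
have fP r : vge 1 (e r + 1 - e (f r)) by rewrite resP ?vgeD.
have fK : involutive f.
  move=> r; apply: res_eq; first by rewrite vgeD.
  have -> : e (f r) + 1 - e r = (1 + 1) - (e r + 1 - e (f r)) by ring.
  by rewrite vgeB.
have ffix r : f r != r.
  apply/eqP => fr; move: (fP r); rewrite fr addrAC subrr add0r.
  by rewrite /vge oner_eq0 v1.
by have := card_fixfree_involution fK ffix; rewrite oddR.
Qed.

Definition unit_res := [set r | ~~ vge 1 (e r)].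
Definition sqr_res r := res (e r ^+ 2).
Definition square_res := sqr_res @: unit_res.

Lemma unit_resP r : r \in unit_res -> ounit (e r).
Proof. by rewrite inE ounitE e_int. Qed.

Lemma res_unit x : ounit x -> res x \in unit_res.
Proof.
rewrite ounitE inE => /andP[x0 x1]; apply: contra x1 => r1.
by rewrite -(subrK (e (res x)) x) vgeD ?resP.
Qed.

Lemma sqr_resP r : vge 1 (e r ^+ 2 - e (sqr_res r)).
Proof. by rewrite resP // expr2 vgeMl. Qed.

Lemma square_res_sub : square_res \subset unit_res.
Proof.
apply/subsetP => _ /imsetP[r /unit_resP ur ->].
by rewrite res_unit // expr2 ounitM.
Qed.

Lemma sqr_res_fiber r s : r \in unit_res -> s \in unit_res ->
  sqr_res r = sqr_res s -> s = r \/ s = res (- e r).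
Proof.
move=> /unit_resP ur /unit_resP us hrs.
have rs1 : vge 1 ((e r - e s) * (e r + e s)).
  have -> : (e r - e s) * (e r + e s) =
      (e r ^+ 2 - e (sqr_res r)) - (e s ^+ 2 - e (sqr_res s)) by rewrite hrs; ring.
  by rewrite vgeB ?sqr_resP.
have [h|h] := orP (vge1M (vgeB (e_int r) (e_int s)) (vgeD (e_int r) (e_int s)) rs1).
  by left; apply: e_inj; rewrite -vgeN opprB.
by right; apply/esym/res_eq; rewrite ?vgeN // -vgeN opprB opprK addrC.
Qed.

(* Squaring is at most two-to-one on unit residues. *)
Lemma card_unit_res : (#|unit_res| <= 2 * #|square_res|)%N.
Proof.
rewrite -sum1_card (partition_big_imset sqr_res) /= -/square_res mulnC -sum_nat_const.
apply: leq_sum => _ /imsetP[r ur ->]; rewrite sum1dep_card.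
apply: (@leq_trans #|[set r; res (- e r)]|); last by rewrite cards2; case: (_ != _).
apply/subset_leq_card/subsetP => s; rewrite inE => /andP[us /eqP hs].
by have [->|->] := sqr_res_fiber ur us (esym hs); rewrite !inE eqxx ?orbT.
Qed.

Lemma res_nonsquare x : ounit x -> ~ residue_square x ->
  res x \in unit_res :\: square_res.
Proof.
move=> ux nx; rewrite inE res_unit // andbT; apply/negP => /imsetP[r ur hr].
apply: nx; exists (e r); first exact: e_int.
have -> : x - e r ^+ 2 = (x - e (res x)) - (e r ^+ 2 - e (sqr_res r)) by rewrite hr; ring.
by rewrite vgeB ?sqr_resP ?resP ?ounit_vge0.
Qed.

Section MulNonsquare.
Variable x : F.
Hypotheses (ux : ounit x) (nx : ~ residue_square x).

Definition mul_res r := res (x * e r).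

Lemma mul_resP r : vge 1 (x * e r - e (mul_res r)).
Proof. exact: resP (vgeMl (ounit_vge0 ux) (e_int r)). Qed.

Lemma mul_res_inj : injective mul_res.
Proof.
move=> r s hrs; apply: e_inj; apply: (vge_ounitMl ux).
have -> : x * (e r - e s) = (x * e r - e (mul_res r)) - (x * e s - e (mul_res s)).
  by rewrite hrs; ring.
by rewrite vgeB ?mul_resP.
Qed.

Lemma mul_res_square : mul_res @: square_res \subset unit_res :\: square_res.
Proof.
apply/subsetP => _ /imsetP[r rQ ->].
rewrite inE res_unit ?ounitM ?unit_resP ?(subsetP square_res_sub) // andbT.
apply/negP => /imsetP[k uk hk]; case/imsetP: rQ => j uj hj.
have /andP[ej0 _] := unit_resP uj.
apply: nx; exists (e k / e j); first by rewrite vgeMr ?e_int ?ounitV_vge0 ?unit_resP.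
have -> : x - (e k / e j) ^+ 2 = (x * (e j ^+ 2 - e r) + (x * e r - e (mul_res r))
    - (e k ^+ 2 - e (sqr_res k))) * (e j ^+ 2)^-1.
  by rewrite -hk; field.
apply: vgeMr; last by rewrite ounitV_vge0 // expr2 ounitM ?unit_resP.
apply: vgeB (sqr_resP k); apply: vgeD (mul_resP r).
by apply: vgeMl (ounit_vge0 ux) _; rewrite hj sqr_resP.
Qed.

Lemma mul_res_squareE : mul_res @: square_res = unit_res :\: square_res.
Proof.
apply/eqP; rewrite eqEcard mul_res_square card_imset; last exact: mul_res_inj.
have := card_unit_res; rewrite cardsD (setIidPr square_res_sub); lia.
Qed.

End MulNonsquare.

Lemma residue_nonsquareM x y : ounit x -> ounit y ->
  ~ residue_square x -> ~ residue_square y -> residue_square (x * y).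
Proof.
move=> ux uy nx ny; have x0 := ounit_vge0 ux.
have := res_nonsquare uy ny.
rewrite -(mul_res_squareE ux nx) => /imsetP[_ /imsetP[j uj ->] hy].
exists (x * e j); first exact: vgeMl x0 (e_int j).
have -> : x * y - (x * e j) ^+ 2 = x * (y - e (res y))
    + x * (e (mul_res x (sqr_res j)) - x * e (sqr_res j))
    - x ^+ 2 * (e j ^+ 2 - e (sqr_res j)) by rewrite hy; ring.
apply: vgeB; first apply: vgeD.
- exact: vgeMl x0 (resP (ounit_vge0 uy)).
- by apply: vgeMl x0 _; rewrite -vgeN opprB mul_resP.
- by apply: vgeMl (sqr_resP j); rewrite expr2 vgeMl.
Qed.

End ResidueSystem.

Hypothesis v_complete : forall u : nat -> F,
  (forall k : int, exists N, forall m n, (N <= m)%N -> (N <= n)%N ->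
     u m - u n = 0 \/ k <= v (u m - u n)) ->
  exists l : F, forall k : int, exists N, forall n, (N <= n)%N ->
     u n - l = 0 \/ k <= v (u n - l).

Section Hensel.
Hypothesis two_unit : ounit 2%:R.
Variable x : F.
Hypothesis ux : ounit x.

Fixpoint newton w (k : nat) :=
  if k is k'.+1 then let y := newton w k' in (y + x / y) / 2%:R else w.

Lemma newton_step y K : ounit y -> 0 <= K -> vge (K + 1) (y ^+ 2 - x) ->
  let y' := (y + x / y) / 2%:R in
  [/\ ounit y', vge (K + 1) (y' - y) & vge (K + 2) (y' ^+ 2 - x)].
Proof.
move=> uy K0 hy y'; have /andP[two0 _] := two_unit; have /andP[y0 _] := uy.
pose d := (x - y ^+ 2) / (2%:R * y).
have hd : vge (K + 1) d.
  by apply: vgeMr; rewrite ?ounitV_vge0 ?ounitM // -vgeN opprB.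
have -> : y' = y + d by rewrite /y' /d; field; rewrite two0 y0.
split.
- by rewrite ounitD // (vgeW _ hd) //; lia.
- by rewrite addrAC subrr add0r.
- have -> : (y + d) ^+ 2 - x = d * d by rewrite /d; field; rewrite two0 y0.
  by apply: vgeW (vgeM hd hd); lia.
Qed.

Section Newton.
Variable w : F.
Hypotheses (w0 : vge 0 w) (xw : vge 1 (x - w ^+ 2)).

Lemma newton_approx (k : nat) : ounit (newton w k) /\ vge (k%:Z + 1) (newton w k ^+ 2 - x).
Proof.
elim: k => [|k [uk hk]] /=; last first.
  have [uk' _ hk'] := newton_step uk (isT : 0 <= k%:Z) hk.
  by split=> //; apply: vgeW hk'; lia.
split; last by rewrite -vgeN opprB.
apply: ounit_sqr; rewrite -(subrKC x (w ^+ 2)) ounitD //.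
by rewrite -vgeN opprB.
Qed.

Lemma newton_cauchy (k j : nat) : vge (k%:Z + 1) (newton w (k + j) - newton w k).
Proof.
elim: j => [|j IH]; first by rewrite addn0 subrr vge0.
have [uk hk] := newton_approx (k + j).
have [_ step _] := newton_step uk (isT : 0 <= (k + j)%:Z) hk.
rewrite -[_ - newton w k](subrKA (newton w (k + j))) addnS /=.
by apply: vgeD IH; apply: vgeW step; lia.
Qed.

Lemma newton_sqrt : exists z, z ^+ 2 = x.
Proof.
have [l hl] : exists l : F, forall k : int, exists N, forall n, (N <= n)%N ->
    newton w n - l = 0 \/ k <= v (newton w n - l).
  apply: v_complete => k; exists `|k|%N => m n hm hn; apply/vgeP.
  wlog nm : m n hm hn / (n <= m)%N.
    move=> hw; case: (leqP n m) => [|/ltnW] h; first exact: hw.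
    by rewrite -vgeN opprB hw.
  by rewrite -(subnKC nm); apply: vgeW (newton_cauchy _ _); lia.
exists l; apply/eqP; rewrite -subr_eq0; apply/eqP/vge_eq0 => k.
have [N /(_ (maxn N k)) hN] := hl k; have /vgeP hn := hN (leq_maxl _ _).
have [un hn2] := newton_approx (maxn N k); set y := newton w _ in hn hn2 un.
have ly : vge k (l - y) by rewrite -vgeN opprB.
have -> : l ^+ 2 - x = (l - y) * (l - y + (y + y)) + (y ^+ 2 - x) by ring.
apply: vgeD; last by apply: vgeW hn2; have := leq_maxr N k; lia.
have ly0 : vge 0 (l - y) by apply: vgeW ly; lia.
exact: vgeMr ly (vgeD ly0 (vgeD (ounit_vge0 un) (ounit_vge0 un))).
Qed.

End Newton.
End Hensel.

Lemma hensel_sqrt x : ounit 2%:R -> ounit x -> residue_square x -> exists z, z ^+ 2 = x.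
Proof. by move=> two_unit ux [w w0 xw]; apply: newton_sqrt w0 xw. Qed.

Hypothesis v_residue : exists s : seq F,
  [/\ forall r, r \in s -> in_o v r,
      uniq s,
      forall r1 r2, r1 \in s -> r2 \in s -> r1 != r2 -> ~ in_m v (r1 - r2),
      forall x, in_o v x -> exists2 r, r \in s & in_m v (x - r)
    & odd (size s)].
Hypothesis v_normalized : exists pi : F, pi <> 0 /\ v pi = 1.

Lemma residue_system : exists (R : finType) (e : R -> F) (r0 : R),
  [/\ odd #|R|, forall r, vge 0 (e r), forall r s, vge 1 (e r - e s) -> r = s
    & forall x, vge 0 x -> exists r, vge 1 (x - e r)].
Proof.
have [s [s_o s_uniq s_sep s_cover s_odd]] := v_residue.
have s0 : (0 < size s)%N by case: (size s) s_odd.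
exists 'I_(size s), (fun i : 'I_(size s) => s`_i), (Ordinal s0); split.
- by rewrite card_ord.
- by move=> i; apply/in_oE/s_o/mem_nth.
- move=> i j hij; apply/val_inj/eqP; rewrite -(nth_uniq 0 (ltn_ord i) (ltn_ord j) s_uniq).
  apply/negPn/negP => /(s_sep _ _ (mem_nth 0 (ltn_ord i)) (mem_nth 0 (ltn_ord j))).
  by rewrite in_mE.
- move=> x /in_oE /s_cover [r rs /in_mE hr].
  by exists (Ordinal (etrans (index_mem r s) rs)); rewrite /= nth_index.
Qed.

Lemma ounit2 : ounit 2%:R.
Proof.
have [R [e [r0 [oddR e_int e_inj e_cover]]]] := residue_system.
exact: ounit2_of_odd r0 e_int e_inj e_cover oddR.
Qed.

Lemma canonical_paramP a : canonical_param v a <-> ounit a /\ ~ residue_square (- a).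
Proof.
rewrite /canonical_param is_ounitE; split=> -[ua na]; split=> //.
  move=> /(hensel_sqrt ounit2 _) [|z hz]; first by rewrite ounitN.
  apply: na; exists z; rewrite -expr2 hz is_ounitE; split=> //.
  by apply: ounit_sqr; rewrite hz ounitN.
case=> u [/is_ounitE uu hu]; apply: na; exists u; first exact: ounit_vge0.
by rewrite expr2 hu subrr vge0.
Qed.

Lemma canonical_param_nonsquare a : canonical_param v a -> forall u, u * u != - a.
Proof.
case=> /is_ounitE ua na u; apply/eqP => hu; apply: na; exists u; split=> //.
by apply/is_ounitE/ounit_sqr; rewrite expr2 hu ounitN.
Qed.

Lemma canonical_param_ratio a1 a2 : canonical_param v a1 -> canonical_param v a2 ->
  exists2 y, ounit y & a1 = a2 / y ^+ 2.
Proof.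
move=> /canonical_paramP [u1 n1] /canonical_paramP [u2 n2].
have [R [e [r0 [_ e_int e_inj e_cover]]]] := residue_system.
have := residue_nonsquareM r0 e_int e_inj e_cover _ _ n1 n2.
rewrite mulrNN !ounitN => /(_ u1 u2) sq12.
have [z hz] := hensel_sqrt ounit2 (ounitM u1 u2) sq12.
have uz : ounit z by apply: ounit_sqr; rewrite hz ounitM.
have [/andP[a10 _] /andP[a20 _]] := (u1, u2).
exists (z / a1); first by rewrite ounitM ?ounitV.
by rewrite expr_div_n hz; field; rewrite a10 a20.
Qed.

Lemma exists_val (k : int) : exists2 w, w != 0 & v w = k.
Proof.
have [pi [/eqP pi0 vpi]] := v_normalized.
case: k => n; first by exists (pi ^+ n); rewrite ?expf_neq0 // vX // vpi mulr1.
exists (pi ^+ n.+1)^-1; first by rewrite invr_eq0 expf_neq0.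
by rewrite vV ?expf_neq0 // vX // vpi mulr1 NegzE.
Qed.

(* Complete the square, then rescale by [a(w)] so that the valuation of the
   discriminant, which is even, is absorbed. *)
Lemma inert_params_canonical a b c : inert_params v a b c ->
  exists2 a', canonical_param v a' & conjugate (torus a b c) (torus a' 0 1).
Proof.
rewrite /inert_params; set d := _ - _ => -[/eqP d0 [d_nsq /even_int_half [m vd]]].
have c0 : c != 0.
  by apply: contra_notN d_nsq => /eqP c0; exists b; rewrite /d c0 mulr0 subr0 expr2.
have /andP[two0 _] := ounit2; have c20 : 2%:R * c != 0 by rewrite mulf_neq0.
have [w w0 vw] := exists_val (m - v (2%:R * c)).
pose a' := - d / (2%:R * c) ^+ 2 / w ^+ 2.
have ea' : a' = - (d / (2%:R * c * w) ^+ 2) by rewrite /a'; field; rewrite ?w0 ?c0 ?two0.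
exists a'; last first.
  apply: conjugate_trans (conj_torus_diag a b c0 two0) _.
  by exists (amx w); [exact: amx_unit | exact: conj_amx_torus].
have cw0 : 2%:R * c * w != 0 by rewrite mulf_neq0.
split.
  apply/is_ounitE; rewrite /ounit ea' oppr_eq0 mulf_neq0 ?invr_eq0 ?expf_neq0 //=.
  by rewrite vN vM ?invr_eq0 ?expf_neq0 // vV ?expf_neq0 // vX // vM // vw vd; lia.
case=> u [_ hu]; apply: d_nsq; exists (u * (2%:R * c * w)).
by rewrite mulrACA hu ea' opprK -expr2 mulfVK ?expf_neq0.
Qed.

Lemma canonical_param_conj_amx a1 a2 : canonical_param v a1 -> canonical_param v a2 ->
  exists2 y, ounit y & same_set (torus a1 0 1) (conj_set (amx y) (torus a2 0 1)).
Proof.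
move=> c1 c2; have [y uy ->] := canonical_param_ratio c1 c2.
by exists y => //; apply/same_set_sym/conj_amx_torus; case/andP: uy.
Qed.

Lemma inert_torus_canonical T : inert_torus v T ->
  exists2 a, canonical_param v a & conjugate T (torus a 0 1).
Proof.
case=> a [b [c [ip hT]]]; have [a' ca' hconj] := inert_params_canonical ip.
by exists a' => //; apply: conjugate_trans (same_set_conjugate hT) hconj.
Qed.

Lemma inert_tori_conjugate T1 T2 : inert_torus v T1 -> inert_torus v T2 -> conjugate T1 T2.
Proof.
move=> /inert_torus_canonical [a1 c1 h1] /inert_torus_canonical [a2 c2 h2].
have [y /andP[y0 _] hy] := canonical_param_conj_amx c2 c1.
apply: conjugate_trans h1 (conjugate_trans _ (conjugate_sym h2)).
by exists (amx y); [exact: amx_unit | exact: same_set_sym].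
Qed.

Lemma inert_torus_canonical_form T : inert_torus v T ->
  exists2 g, inG g & canonical_torus v (conj_set g T).
Proof. by case/inert_torus_canonical => a ca [g ug hg]; exists g => //; exists a. Qed.

Lemma canonical_tori_conj_amx T1 T2 : canonical_torus v T1 -> canonical_torus v T2 ->
  exists2 y, is_ounit v y & same_set T1 (conj_set (amx y) T2).
Proof.
case=> a1 [c1 h1] [a2 [c2 h2]]; have [y uy hy] := canonical_param_conj_amx c1 c2.
exists y; first exact/is_ounitE.
exact: same_set_trans h1 (same_set_trans hy (conj_set_same _ (same_set_sym h2))).
Qed.

(* For a unit [p], [a p^2 + c^2] in the maximal ideal would make [-a]
   congruent to [(c/p)^2]. *)
Lemma diag_form_ounit a c p : ounit a -> ~ residue_square (- a) ->
  vge 0 c -> vge 0 p -> ~~ (vge 1 c && vge 1 p) -> ounit (a * p ^+ 2 + c ^+ 2).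
Proof.
move=> ua na c0 p0 cp; have a0 := ounit_vge0 ua.
rewrite ounitE vgeD ?vgeMl ?expr2 ?vgeMl //=; apply/negP => h.
case p1 : (vge 1 p).
  move: cp; rewrite p1 andbT => /negP; apply.
  have := vge1M c0 c0; rewrite orbb; apply.
  by rewrite -(addKr (a * (p * p)) (c * c)) vgeD // vgeN vgeMl // vgeMr.
have up : ounit p by rewrite ounitE p0 p1.
apply: na; exists (c / p); first by rewrite vgeMr ?ounitV_vge0.
have /andP[pn0 _] := up.
have -> : - a - (c / p) ^+ 2 = - (a * (p * p) + c * c) * (p * p)^-1 by field.
by rewrite vgeMr ?vgeN // ounitV_vge0 ?ounitM.
Qed.

Lemma inK_torus_factor a g : canonical_param v a -> inK v g -> inK v (torus_factor a g).
Proof.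
move=> /canonical_paramP [ua na] kg; have /inKE[g00 g01 g10 g11 gd] := kg.
have /andP[an0 _] := ua.
have prim : ~~ (vge 1 (g 1 0) && vge 1 (g 1 1)).
  apply: contraTN gd => /andP[c1 p1]; rewrite ounitE negb_and negbK (mx2_eta g) det_mx2.
  by apply/orP; right; apply: vgeB; apply: vgeMl.
apply/inKE; rewrite /torus_factor det_mx2 !mx2E.
split=> //; first by rewrite vgeMr ?vgeN ?ounitV_vge0.
have -> : g 1 1 * g 1 1 - - g 1 0 / a * g 1 0 = (a * g 1 1 ^+ 2 + g 1 0 ^+ 2) / a.
  by field.
by rewrite ounitM ?ounitV ?diag_form_ounit.
Qed.

Lemma canonical_torus_decomp T : canonical_torus v T ->
  [/\ same_set (@inG F) (prod_set (@inB1 F) T),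
      same_set (@inG F) (prod_set T (@inB1 F)),
      same_set (inK v) (prod_set (inB1o v) (inTo v T))
    & same_set (inK v) (prod_set (inTo v T) (inB1o v))].
Proof.
case=> a [ca hT]; have na := canonical_param_nonsquare ca.
have [/is_ounitE/andP[a0 _] _] := ca.
have TV t : T t -> t \in unitmx /\ T (invmx t).
  by move/hT => ht; split; [case: ht | apply/hT; exact: form_torusV].
have BV b : @inB1 F b -> b \in unitmx /\ inB1 (invmx b).
  by move=> hb; split; [exact: inB1_unit | exact: inB1V].
have GBT : same_set (@inG F) (prod_set (@inB1 F) T).
  move=> g; split=> [ug|[b [t [hb ht ->]]]]; last first.
    by rewrite /inG unitmx_mul inB1_unit //; have [] := TV t ht.
  exists (g *m invmx (torus_factor a g)), (torus_factor a g).
  by split; [exact: B1_torus_factor | apply/hT; exact: torus_factorP | exact: torus_factor_decomp].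
have KBT : same_set (inK v) (prod_set (inB1o v) (inTo v T)).
  move=> g; split=> [kg|[b [t [[_ kb] [_ kt] ->]]]]; last exact: inK_mul.
  have ug := inK_unit kg; have kt := inK_torus_factor ca kg.
  exists (g *m invmx (torus_factor a g)), (torus_factor a g); split.
  - by split; [exact: B1_torus_factor | exact: inK_mul kg (inK_inv kt)].
  - by split=> //; apply/hT; exact: torus_factorP.
  - exact: torus_factor_decomp.
split=> //.
- by apply: (prod_set_swap _ BV TV GBT) => g; rewrite /inG unitmx_inv.
- apply: (prod_set_swap inK_inv _ _ KBT).
  + by move=> b [/BV[ub hb] kb]; split=> //; split=> //; exact: inK_inv.
  + by move=> t [/TV[ut ht] kt]; split=> //; split=> //; exact: inK_inv.
Qed.

End LocalField.

Theorem proposition2p3 (F : fieldType) (v : F -> int) :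
  nonarch_local_field v ->
  (* (1) *)
  (forall T1 T2 : 'M[F]_2 -> Prop, inert_torus v T1 -> inert_torus v T2 ->
     exists2 g, inG g & same_set (conj_set g T1) T2) /\
  (* (2) *)
  (forall T : 'M[F]_2 -> Prop, inert_torus v T ->
     exists2 g, inG g & canonical_torus v (conj_set g T)) /\
  (* (3) *)
  (forall T1 T2 : 'M[F]_2 -> Prop, canonical_torus v T1 -> canonical_torus v T2 ->
     exists2 y, is_ounit v y & same_set T1 (conj_set (amx y) T2)) /\
  (* (4) *)
  (forall T : 'M[F]_2 -> Prop, canonical_torus v T ->
     [/\ same_set (@inG F) (prod_set (@inB1 F) T),
         same_set (@inG F) (prod_set T (@inB1 F)),
         same_set (inK v) (prod_set (inB1o v) (inTo v T))
       & same_set (inK v) (prod_set (inTo v T) (inB1o v))]).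
Proof.
case=> _ v_mul v_ultra v_normalized v_complete v_residue.
split; [|split; [|split]] => [T1 T2|T|T1 T2|T].
- exact: inert_tori_conjugate.
- exact: inert_torus_canonical_form.
- exact: canonical_tori_conj_amx.
- exact: canonical_torus_decomp.
Qed.
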